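(* Let $\mathcal R$ be a commutative ring with identity, $\mathcal M,\mathcal N$ modules over $\mathcal R$, $s\in\mathbb N$, $Y\in\mathcal M^{s\times s}$, and let $f_\ell:(\mathcal M^{s\times s})^\ell\to\mathcal N^{s\times s}$, $\ell=0,1,\dots$, be $\ell$-linear mappings ($f_0\in\mathcal N^{s\times s}$) such that for every $S\in\mathcal R^{s\times s}$ and $Z^1,\dots,Z^\ell\in\mathcal M^{s\times s}$: $Sf_0-f_0S=f_1(SY-YS)$; and for $\ell\ge1$: $Sf_\ell(Z^1,\dots,Z^\ell)-f_\ell(SZ^1,Z^2,\dots,Z^\ell)=f_{\ell+1}(SY-YS,Z^1,\dots,Z^\ell)$; for $1\le j\le\ell-1$: $f_\ell(Z^1,\dots,Z^{j-1},Z^jS,Z^{j+1},\dots,Z^\ell)-f_\ell(Z^1,\dots,Z^j,SZ^{j+1},Z^{j+2},\dots,Z^\ell)=f_{\ell+1}(Z^1,\dots,Z^j,SY-YS,Z^{j+1},\dots,Z^\ell)$; $f_\ell(Z^1,\dots,Z^{\ell-1},Z^\ell S)-f_\ell(Z^1,\dots,Z^\ell)S=f_{\ell+1}(Z^1,\dots,Z^\ell,SY-YS)$. Then the function $f$ defined on $\mathrm{Nilp}(\mathcal M,Y)$ by $f(X)=\sum_{\ell=0}^\infty(X-\bigoplus_{\alpha=1}^mY)^{\odot_s\ell}f_\ell$ for $X\in\mathrm{Nilp}(\mathcal M,Y)\cap\mathcal M^{sm\times sm}$ (a sum with finitely many nonzero terms) is a nc function on $\mathrm{Nilp}(\mathcal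 M,Y)$ with values in $\mathcal N_{\mathrm{nc}}$.
   Context: $\mathcal M_{\mathrm{nc}}=\coprod_{n\ge1}\mathcal M^{n\times n}$; matrices over $\mathcal R$ act on matrices over $\mathcal M,\mathcal N$ by matrix multiplication; $X\oplus Y=\begin{bmatrix}X&0\\0&Y\end{bmatrix}$. A nc function on a set $\Omega$ closed under direct sums (with $\Omega_n=\Omega\cap\mathcal M^{n\times n}$) is a map $f$ with $f(\Omega_n)\subseteq\mathcal N^{n\times n}$, $f(X\oplus X')=f(X)\oplus f(X')$, and $f(SXS^{-1})=Sf(X)S^{-1}$ whenever $S\in\mathcal R^{n\times n}$ invertible and $X,SXS^{-1}\in\Omega_n$. For $W\in\mathcal M^{sm\times sm}$ viewed as an $m\times m$ matrix $[W_{ij}]$ of blocks in $\mathcal M^{s\times s}$, $W^{\odot_s\ell}$ is the $m\times m$ matrix over $(\mathcal M^{s\times s})^{\otimes\ell}$ with $(i,k)$ entry $\sum_{j_1,\dots,j_{\ell-1}}W_{ij_1}\otimes\cdots\otimes W_{j_{\ell-1}k}$; $W^{\odot_s\ell}f_\ell\in\mathcal N^{sm\times sm}$ applies $f_\ell$ (as a linear map on the tensor power) entrywise, and $W^{\odot_s0}f_0=\bigoplus_{\alpha=1}^mf_0$. $\mathrm{Nilp}(\mathcal M,Y)=\coprod_m\{X\in\mathcal M^{sm\times sm}:(X-\bigoplus_{\alpha=1}^mY)^{\odot_s\ell}=0\text{ for some }\ell\}$. *)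

From HB Require Import structures.
From mathcomp Require Import all_boot all_order all_algebra zify.
Set Implicit Arguments. Unset Strict Implicit. Unset Printing Implicit Defensive.
Import Order.TTheory GRing.Theory.
Local Open Scope ring_scope.

Definition scm (R : comNzRingType) (V : lmodType R) p q (c : R) (x : 'M[V]_(p, q))
  : 'M[V]_(p, q) := map_mx ( *:%R c) x.

Section NC.
Variables (R : comNzRingType) (M : lmodType R).

Definition lmul p q r (S : 'M[R]_(p, q)) (X : 'M[M]_(q, r)) : 'M[M]_(p, r) :=
  \matrix_(i, k) \sum_(j < q) S i j *: X j k.
Definition rmul p q r (X : 'M[M]_(p, q)) (S : 'M[R]_(q, r)) : 'M[M]_(p, r) :=
  \matrix_(i, k) \sum_(j < q) S j k *: X i j.

Definition dsum n n' (X : 'M[M]_n) (X' : 'M[M]_n') : 'M[M]_(n + n') :=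
  block_mx X 0 0 X'.

Definition commS s (S : 'M[R]_s) (Y : 'M[M]_s) : 'M[M]_s := lmul S Y - rmul Y S.

Lemma bidx_proof s m n (h : (s * m)%N = n) (i : 'I_m) (a : 'I_s) :
  (i * s + a < n)%N.
Proof. rewrite -h; have := ltn_ord i; have := ltn_ord a; nia. Qed.
Definition bidx s m n (h : (s * m)%N = n) (i : 'I_m) (a : 'I_s) : 'I_n :=
  Ordinal (bidx_proof h i a).

Definition blk s m n (h : (s * m)%N = n) (W : 'M[M]_n) (i j : 'I_m) : 'M[M]_s :=
  \matrix_(a, b) W (bidx h i a) (bidx h j b).

Definition bdiag s m n (h : (s * m)%N = n) (Y : 'M[M]_s) : 'M[M]_n :=
  \matrix_(p, q) \sum_(i < m) \sum_(a < s) \sum_(b < s)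
     (if (bidx h i a == p) && (bidx h i b == q) then Y a b else 0).

Definition multilinear_on (P : lmodType R) s (l : nat) (g : seq 'M[M]_s -> P) :=
  forall (a b : seq 'M[M]_s) (c : R) (x y : 'M[M]_s),
    (size a + size b).+1 = l ->
    g (a ++ (scm c x + y) :: b) = c *: g (a ++ x :: b) + g (a ++ y :: b).


Definition path_word s m n (h : (s * m)%N = n) (W : 'M[M]_n) l
    (p : {ffun 'I_l.+1 -> 'I_m}) : seq 'M[M]_s :=
  [seq blk h W (p (widen_ord (leqnSn l) j)) (p (lift ord0 j)) | j <- enum 'I_l].

(* (i,k) entry of W^{(.)_s l} g, for g an l-linear map into P *)
Definition odot_entry (P : nmodType) s m n (h : (s * m)%N = n) (W : 'M[M]_n)
    l (g : seq 'M[M]_s -> P) (i k : 'I_m) : P :=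
  \sum_(p : {ffun 'I_l.+1 -> 'I_m} | (p ord0 == i) && (p ord_max == k))
     g (path_word h W p).

(* W^{(.)_s l} = 0 as an m x m matrix over the tensor power (M^{s x s})^{(x) l},
   expressed via the universal property of the tensor product: every l-linear
   map kills all entries. *)
Definition odot_zero s m n (h : (s * m)%N = n) (W : 'M[M]_n) (l : nat) : Prop :=
  forall (P : lmodType R) (g : seq 'M[M]_s -> P), multilinear_on l g ->
    forall i k : 'I_m, odot_entry h W l g i k = 0.

Definition nilpot s m n (h : (s * m)%N = n) (Y : 'M[M]_s) (X : 'M[M]_n) : Prop :=
  exists l, odot_zero h (X - bdiag h Y) l.

Definition NilpD s (Y : 'M[M]_s) (n : nat) (X : 'M[M]_n) : Prop :=
  exists m (h : (s * m)%N = n), (0 < m)%N /\ nilpot h Y X.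

End NC.

Section NC2.
Variables (R : comNzRingType) (M N : lmodType R).

(* a family (f_l)_l of l-linear maps (M^{s x s})^l -> N^{s x s}, encoded as
   one map F on lists: f_l is the restriction of F to lists of length l *)
Definition multilinear s (F : seq 'M[M]_s -> 'M[N]_s) :=
  forall (a b : seq 'M[M]_s) (c : R) (x y : 'M[M]_s),
    F (a ++ (scm c x + y) :: b) = scm c (F (a ++ x :: b)) + F (a ++ y :: b).

Definition unblk s m n (h : (s * m)%N = n) (B : 'I_m -> 'I_m -> 'M[N]_s) : 'M[N]_n :=
  \matrix_(p, q) \sum_(i < m) \sum_(j < m) \sum_(a < s) \sum_(b < s)
     (if (bidx h i a == p) && (bidx h j b == q) then B i j a b else 0).

Definition psum s m n (h : (s * m)%N = n) (Y : 'M[M]_s)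
    (F : seq 'M[M]_s -> 'M[N]_s) (L : nat) (X : 'M[M]_n) : 'M[N]_n :=
  unblk h (fun i k => \sum_(l < L) odot_entry h (X - bdiag h Y) l F i k).

Definition nc_fun (Dom : forall n, 'M[M]_n -> Prop)
    (f : forall n, 'M[M]_n -> 'M[N]_n) : Prop :=
  [/\ (forall n n' (X : 'M[M]_n) (X' : 'M[M]_n'),
         Dom n X -> Dom n' X' -> Dom (n + n')%N (dsum X X')),
      (forall n n' (X : 'M[M]_n) (X' : 'M[M]_n'),
         Dom n X -> Dom n' X' ->
         f (n + n')%N (dsum X X') = dsum (f n X) (f n' X')) &
      (forall n (X : 'M[M]_n) (S T : 'M[R]_n),
         S *m T = 1%:M -> T *m S = 1%:M ->
         Dom n X -> Dom n (rmul (lmul S X) T) ->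
         f n (rmul (lmul S X) T) = rmul (lmul S (f n X)) T)].

End NC2.

(* Write W = X - (+)Y and W' = X' - (+)Y where S X = X' S. Blockwise, S W = W' S - D with
   D = [S_ij Y - Y S_ij]. The hypotheses on the f_l say that moving S across one argument of
   f_l costs the term with S Y - Y S inserted there, and they lift verbatim to block words.
   Pushing S from the left to the right of W^(.)l f therefore gives
     S (W^(.)l f) + U_l = (W'^(.)l f) S + U_(l+1),   U_L = sum_(a+b=L-1) W'^(.)a (.) D (.) W^(.)b f,
   which telescopes over l < L. Once L exceeds the sum of the nilpotency orders of W and W',
   every word in U_L contains a vanishing power of W or W', so the (eventually constant)
   partial sums intertwine S. Powers of a block diagonal matrix are block diagonal, which
   gives compatibility with direct sums. *)

From HB Require Import structures.
From mathcomp Require Import all_boot all_order all_algebra zify.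
From Stdlib Require Import FunctionalExtensionality ClassicalEpsilon.
Import GRing.Theory.
Local Open Scope ring_scope.
Set Implicit Arguments. Unset Strict Implicit. Unset Printing Implicit Defensive.

Section MatrixAction.
Variables (R : comNzRingType) (V : lmodType R).

Lemma scm1 p q (x : 'M[V]_(p, q)) : scm 1 x = x.
Proof. by apply/matrixP => i j; rewrite !mxE scale1r. Qed.

Lemma lmulD p q r (S : 'M[R]_(p, q)) (x y : 'M[V]_(q, r)) :
  lmul S (x + y) = lmul S x + lmul S y.
Proof.
by apply/matrixP => i k; rewrite !mxE -big_split; apply: eq_bigr => j _; rewrite mxE scalerDr.
Qed.

Lemma lmulB p q r (S : 'M[R]_(p, q)) (x y : 'M[V]_(q, r)) :
  lmul S (x - y) = lmul S x - lmul S y.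
Proof.
by apply/matrixP => i k; rewrite !mxE -sumrB; apply: eq_bigr => j _; rewrite !mxE scalerBr.
Qed.

Lemma lmul0 p q r (S : 'M[R]_(p, q)) : lmul S (0 : 'M[V]_(q, r)) = 0.
Proof. by rewrite -(subrr 0) lmulB subrr. Qed.

Lemma lmul_sum p q r (S : 'M[R]_(p, q)) (I : Type) (xs : seq I) (G : I -> 'M[V]_(q, r)) :
  lmul S (\sum_(x <- xs) G x) = \sum_(x <- xs) lmul S (G x).
Proof. by apply: (big_morph (lmul S)); [exact: lmulD | exact: lmul0]. Qed.

Lemma rmulD p q r (x y : 'M[V]_(p, q)) (S : 'M[R]_(q, r)) :
  rmul (x + y) S = rmul x S + rmul y S.
Proof.
by apply/matrixP => i k; rewrite !mxE -big_split; apply: eq_bigr => j _; rewrite mxE scalerDr.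
Qed.

Lemma rmulB p q r (x y : 'M[V]_(p, q)) (S : 'M[R]_(q, r)) :
  rmul (x - y) S = rmul x S - rmul y S.
Proof.
by apply/matrixP => i k; rewrite !mxE -sumrB; apply: eq_bigr => j _; rewrite !mxE scalerBr.
Qed.

Lemma rmul0 p q r (S : 'M[R]_(q, r)) : rmul (0 : 'M[V]_(p, q)) S = 0.
Proof. by rewrite -(subrr 0) rmulB subrr. Qed.

Lemma rmul_sum p q r (S : 'M[R]_(q, r)) (I : Type) (xs : seq I) (G : I -> 'M[V]_(p, q)) :
  rmul (\sum_(x <- xs) G x) S = \sum_(x <- xs) rmul (G x) S.
Proof.
by apply: (big_morph (fun x : 'M[V]_(p, q) => rmul x S)); [move=> x y; exact: rmulD | exact: rmul0].
Qed.

Lemma rmulA p q r t (x : 'M[V]_(p, q)) (S : 'M[R]_(q, r)) (T : 'M[R]_(r, t)) :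
  rmul (rmul x S) T = rmul x (S *m T).
Proof.
apply/matrixP => i k; rewrite !mxE.
under eq_bigr => j _ do rewrite mxE scaler_sumr.
rewrite exchange_big /=; apply: eq_bigr => j _; rewrite mxE scaler_suml.
by apply: eq_bigr => l _; rewrite scalerA mulrC.
Qed.

Lemma rmul1 p q (x : 'M[V]_(p, q)) : rmul x 1%:M = x.
Proof.
apply/matrixP => i k; rewrite !mxE (bigD1 k) //= big1 ?addr0 => [|j /negbTE ne].
  by rewrite mxE eqxx scale1r.
by rewrite mxE ne scale0r.
Qed.

End MatrixAction.

(* A list [B_1; ...; B_l] of m x m block matrices (given by their blocks) acts on
   g : seq A -> P; [odot_seq Bs g i k] is the (i, k) entry of
   (B_1 (.) ... (.) B_l) g, that is the sum of g [B_1 i j_1; ...; B_l j_(l-1) k]. *)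
Fixpoint odot_seq (A : Type) (P : zmodType) (m : nat) (Bs : seq ('I_m -> 'I_m -> A))
    (g : seq A -> P) (i k : 'I_m) {struct Bs} : P :=
  match Bs with
  | [::] => if i == k then g [::] else 0
  | B :: Bs' => \sum_(j < m) odot_seq Bs' (fun w => g (B i j :: w)) j k
  end.

Section OdotSeq.
Variables (A : Type) (m : nat).
Implicit Types (Bs : seq ('I_m -> 'I_m -> A)).

Lemma eq_odot_seq_size (P : zmodType) Bs (g1 g2 : seq A -> P) :
  (forall w, size w = size Bs -> g1 w = g2 w) ->
  forall i k, odot_seq Bs g1 i k = odot_seq Bs g2 i k.
Proof.
elim: Bs g1 g2 => [|B Bs IH] g1 g2 eq_g i k /=; first by rewrite eq_g.
by apply: eq_bigr => j _; apply: IH => w sw; apply: eq_g; rewrite /= sw.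
Qed.

Lemma eq_odot_seq (P : zmodType) Bs (g1 g2 : seq A -> P) :
  g1 =1 g2 -> forall i k, odot_seq Bs g1 i k = odot_seq Bs g2 i k.
Proof. by move=> eq_g; apply: eq_odot_seq_size => w _; apply: eq_g. Qed.

Lemma odot_seq_morph (P Q : zmodType) (phi : P -> Q) Bs (g : seq A -> P) i k :
  phi 0 = 0 -> {morph phi : x y / x + y} ->
  odot_seq Bs (fun w => phi (g w)) i k = phi (odot_seq Bs g i k).
Proof.
move=> phi0 phiD; elim: Bs g i k => [|B Bs IH] g i k /=; first by case: (i == k).
rewrite (big_morph phi phiD phi0); apply: eq_bigr => j _.
exact: (IH (fun w => g (B i j :: w))).
Qed.

Lemma odot_seqD (P : zmodType) Bs (g1 g2 : seq A -> P) i k :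
  odot_seq Bs (fun w => g1 w + g2 w) i k = odot_seq Bs g1 i k + odot_seq Bs g2 i k.
Proof.
elim: Bs g1 g2 i k => [|B Bs IH] g1 g2 i k /=; first by case: (i == k); rewrite ?addr0.
by rewrite -big_split; apply: eq_bigr => j _; exact: IH.
Qed.

Lemma odot_seqB (P : zmodType) Bs (g1 g2 : seq A -> P) i k :
  odot_seq Bs (fun w => g1 w - g2 w) i k = odot_seq Bs g1 i k - odot_seq Bs g2 i k.
Proof.
rewrite odot_seqD; congr (_ + _).
by rewrite (odot_seq_morph (phi := -%R)) ?oppr0 //; exact: opprD.
Qed.

Lemma odot_seqZ (R : nzRingType) (P : lmodType R) Bs (g : seq A -> P) c i k :
  odot_seq Bs (fun w => c *: g w) i k = c *: odot_seq Bs g i k.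
Proof. by rewrite (odot_seq_morph (phi := *:%R c)) ?scaler0 //; exact: scalerDr. Qed.

Lemma odot_seq0 (P : zmodType) Bs (g : seq A -> P) i k :
  (forall w, size w = size Bs -> g w = 0) -> odot_seq Bs g i k = 0.
Proof.
move=> g0; rewrite (@eq_odot_seq_size _ _ _ (fun=> 0) g0).
elim: Bs i k {g0} => [|B Bs IH] i k /=; first by case: (i == k).
by rewrite big1.
Qed.

Lemma odot_seq_sum (P : zmodType) (I : Type) (xs : seq I) Bs (G : I -> seq A -> P) i k :
  odot_seq Bs (fun w => \sum_(x <- xs) G x w) i k = \sum_(x <- xs) odot_seq Bs (G x) i k.
Proof.
elim: xs => [|x xs IH]; first by rewrite big_nil odot_seq0 // => w _; rewrite big_nil.
by rewrite big_cons -IH -odot_seqD; apply: eq_odot_seq => w; rewrite big_cons.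
Qed.

Lemma odot_seq_cat (P : zmodType) Bs1 Bs2 (g : seq A -> P) i k :
  odot_seq (Bs1 ++ Bs2) g i k =
  \sum_(j < m) odot_seq Bs1 (fun w => odot_seq Bs2 (fun w' => g (w ++ w')) j k) i j.
Proof.
elim: Bs1 g i k => [|B Bs1 IH] g i k /=.
  by rewrite (bigD1 i) //= eqxx big1 ?addr0 // => j; rewrite eq_sym => /negbTE ->.
by rewrite exchange_big /=; apply: eq_bigr => j _; rewrite IH.
Qed.

Lemma odot_seq1 (P : zmodType) (B : 'I_m -> 'I_m -> A) (g : seq A -> P) i k :
  odot_seq [:: B] g i k = g [:: B i k].
Proof. by rewrite /= (bigD1 k) //= eqxx big1 ?addr0 // => j /negbTE ->. Qed.

Lemma odot_seq2 (P : zmodType) (B1 B2 : 'I_m -> 'I_m -> A) (g : seq A -> P) i k :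
  odot_seq [:: B1; B2] g i k = \sum_(j < m) g [:: B1 i j; B2 j k].
Proof. by apply: eq_bigr => j _; exact: (odot_seq1 B2 (fun w => g (B1 i j :: w))). Qed.

End OdotSeq.

Lemma cat_nseq_cons (T : Type) a (x : T) l : nseq a x ++ x :: l = nseq a.+1 x ++ l.
Proof. by elim: a => //= a ->. Qed.

Lemma sumr_only (V : nmodType) (I : finType) (i0 : I) (F : I -> V) :
  (forall i, i != i0 -> F i = 0) -> \sum_i F i = F i0.
Proof. by move=> F0; rewrite (bigD1 i0) //= big1 ?addr0. Qed.

Section Blocks.
Variables (s m n : nat) (h : (s * m)%N = n).

Lemma eq_bidx (i j : 'I_m) (a b : 'I_s) :
  (bidx h i a == bidx h j b) = (i == j) && (a == b).
Proof.
apply/eqP/andP => [/(congr1 val) /= E|[/eqP -> /eqP ->] //].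
have ab : (a : nat) = b by have := congr1 (modn^~ s) E; rewrite !modnMDl !modn_small.
have s_gt0 : (0 < s)%N by case: s a {E ab} => [[]|].
rewrite ab in E; split; apply/eqP/val_inj => //=.
by apply/eqP; rewrite -(eqn_pmul2r s_gt0); apply/eqP; lia.
Qed.

Lemma bidx_bounds (p : 'I_n) : (p %/ s < m)%N /\ (p %% s < s)%N.
Proof.
have p_lt : (p < s * m)%N by rewrite h.
have s_gt0 : (0 < s)%N by case: s p_lt => //; rewrite mul0n.
by rewrite ltn_divLR // mulnC ltn_pmod.
Qed.

Definition unbidx (p : 'I_n) : 'I_m * 'I_s :=
  (Ordinal (proj1 (bidx_bounds p)), Ordinal (proj2 (bidx_bounds p))).

Lemma unbidxK (p : 'I_n) : bidx h (unbidx p).1 (unbidx p).2 = p.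
Proof. by apply: val_inj => /=; rewrite -divn_eq. Qed.

Lemma bidxK (i : 'I_m) (a : 'I_s) : unbidx (bidx h i a) = (i, a).
Proof.
case E: (unbidx _) => [i' a']; have := unbidxK (bidx h i a).
by rewrite E /= => /eqP; rewrite eq_bidx => /andP [/eqP -> /eqP ->].
Qed.

Lemma sum_bidx (V : nmodType) (G : 'I_n -> V) :
  \sum_(p < n) G p = \sum_(i < m) \sum_(a < s) G (bidx h i a).
Proof.
rewrite pair_big /= (reindex (fun ia : 'I_m * 'I_s => bidx h ia.1 ia.2)) //.
by apply: onW_bij; exists unbidx => [[i a]|p]; [exact: bidxK | exact: unbidxK].
Qed.

Definition mxblk (T : Type) (W : 'M[T]_n) (i j : 'I_m) : 'M[T]_s :=
  \matrix_(a, b) W (bidx h i a) (bidx h j b).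

Lemma mxblkP (T : Type) (W1 W2 : 'M[T]_n) :
  (forall i j, mxblk W1 i j = mxblk W2 i j) -> W1 = W2.
Proof.
move=> eqW; apply/matrixP => p q; rewrite -(unbidxK p) -(unbidxK q).
by have /matrixP/(_ (unbidx p).2 (unbidx q).2) := eqW (unbidx p).1 (unbidx q).1; rewrite !mxE.
Qed.

Lemma mxblkB (V : zmodType) (W1 W2 : 'M[V]_n) i k :
  mxblk (W1 - W2) i k = mxblk W1 i k - mxblk W2 i k.
Proof. by apply/matrixP => a b; rewrite !mxE. Qed.

Lemma mxblk_unblk (R : comNzRingType) (N : lmodType R) (B : 'I_m -> 'I_m -> 'M[N]_s) i j :
  mxblk (unblk h B) i j = B i j.
Proof.
apply/matrixP => a0 b0; rewrite !mxE.
rewrite (@sumr_only _ _ i) => [|i' ne]; last first.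
  by apply: big1 => j' _; apply: big1 => a _; apply: big1 => b _; rewrite eq_bidx (negbTE ne).
rewrite (@sumr_only _ _ j) => [|j' ne]; last first.
  by apply: big1 => a _; apply: big1 => b _; rewrite !eq_bidx (negbTE ne) andbF.
rewrite (@sumr_only _ _ a0) => [|a ne]; last first.
  by apply: big1 => b _; rewrite !eq_bidx eqxx (negbTE ne).
rewrite (@sumr_only _ _ b0) => [|b ne]; last by rewrite !eq_bidx !eqxx (negbTE ne).
by rewrite !eq_bidx !eqxx.
Qed.

Lemma mxblk_bdiag (R : comNzRingType) (M : lmodType R) (Y : 'M[M]_s) i j :
  mxblk (bdiag h Y) i j = if i == j then Y else 0.
Proof.
apply/matrixP => a0 b0; rewrite !mxE; case: eqP => [<-|/eqP ne].
  rewrite (@sumr_only _ _ i) => [|i' ne]; last first.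
    by apply: big1 => a _; apply: big1 => b _; rewrite eq_bidx (negbTE ne).
  rewrite (@sumr_only _ _ a0) => [|a ne]; last first.
    by apply: big1 => b _; rewrite !eq_bidx eqxx (negbTE ne).
  rewrite (@sumr_only _ _ b0) => [|b ne]; last by rewrite !eq_bidx !eqxx (negbTE ne) andbF.
  by rewrite !eq_bidx !eqxx.
rewrite mxE; apply: big1 => t _; apply: big1 => a _; apply: big1 => b _.
by rewrite !eq_bidx; case: (t =P i) => [->|] //=; rewrite (negbTE ne) andbF.
Qed.

Definition blmul (R : comNzRingType) (V : lmodType R) (Sb : 'I_m -> 'I_m -> 'M[R]_s)
    (B : 'I_m -> 'I_m -> 'M[V]_s) (i k : 'I_m) : 'M[V]_s :=
  \sum_(j < m) lmul (Sb i j) (B j k).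
Definition brmul (R : comNzRingType) (V : lmodType R) (B : 'I_m -> 'I_m -> 'M[V]_s)
    (Sb : 'I_m -> 'I_m -> 'M[R]_s) (i k : 'I_m) : 'M[V]_s :=
  \sum_(j < m) rmul (B i j) (Sb j k).

Lemma mxblk_lmul (R : comNzRingType) (V : lmodType R) (S : 'M[R]_n) (X : 'M[V]_n) i k :
  mxblk (lmul S X) i k = blmul (mxblk S) (mxblk X) i k.
Proof.
apply/matrixP => a b; rewrite !mxE summxE sum_bidx; apply: eq_bigr => j _.
by rewrite mxE; apply: eq_bigr => c _; rewrite !mxE.
Qed.

Lemma mxblk_rmul (R : comNzRingType) (V : lmodType R) (X : 'M[V]_n) (S : 'M[R]_n) i k :
  mxblk (rmul X S) i k = brmul (mxblk X) (mxblk S) i k.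
Proof.
apply/matrixP => a b; rewrite !mxE summxE sum_bidx; apply: eq_bigr => j _.
by rewrite mxE; apply: eq_bigr => c _; rewrite !mxE.
Qed.

End Blocks.

Lemma mx_dim0_eq (V : Type) (s m n : nat) (h : (s * m)%N = n) (A B : 'M[V]_n) :
  s = 0%N -> A = B.
Proof.
move=> s0; have n0 : n = 0%N by rewrite -h s0.
by apply/matrixP => i; have := ltn_ord i; rewrite [X in (_ < X)%N]n0.
Qed.

Lemma blocks_dim_eq (s m1 m2 n : nat) : (0 < s)%N ->
  (s * m1)%N = n -> (s * m2)%N = n -> m1 = m2.
Proof. by move=> s_gt0 h1 h2; apply/eqP; rewrite -(eqn_pmul2l s_gt0) h1 h2. Qed.

Section Paths.
Variables (A : Type) (m : nat) (B : 'I_m -> 'I_m -> A).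

Definition path_blocks l (p : {ffun 'I_l.+1 -> 'I_m}) : seq A :=
  [seq B (p (widen_ord (leqnSn l) j)) (p (lift ord0 j)) | j <- enum 'I_l].

Definition ffun_cons l (x : 'I_m) (q : {ffun 'I_l.+1 -> 'I_m}) : {ffun 'I_l.+2 -> 'I_m} :=
  [ffun t => if unlift ord0 t is Some t' then q t' else x].

Lemma ffun_cons0 l x (q : {ffun 'I_l.+1 -> 'I_m}) : ffun_cons x q ord0 = x.
Proof. by rewrite ffunE unlift_none. Qed.

Lemma ffun_consS l x (q : {ffun 'I_l.+1 -> 'I_m}) t : ffun_cons x q (lift ord0 t) = q t.
Proof. by rewrite ffunE liftK. Qed.

Lemma path_blocks_cons l x (q : {ffun 'I_l.+1 -> 'I_m}) :
  path_blocks (ffun_cons x q) = B x (q ord0) :: path_blocks q.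
Proof.
rewrite /path_blocks enum_ordSl /=.
have -> : widen_ord (leqnSn l.+1) ord0 = ord0 by apply: val_inj.
rewrite ffun_cons0 ffun_consS -map_comp; congr (_ :: _); apply: eq_map => j /=.
have -> : widen_ord (leqnSn l.+1) (lift ord0 j) = lift ord0 (widen_ord (leqnSn l) j).
  exact: val_inj.
by rewrite !ffun_consS.
Qed.

Lemma sum_paths (P : zmodType) l (g : seq A -> P) i k :
  \sum_(p : {ffun 'I_l.+1 -> 'I_m} | (p ord0 == i) && (p ord_max == k)) g (path_blocks p)
  = odot_seq (nseq l B) g i k.
Proof.
elim: l g i => [|l IH] g i /=.
  have -> : (ord_max : 'I_1) = ord0 by apply: val_inj.
  case: eqP => [<-|ne]; last first.
    by rewrite big_pred0 // => p; apply/andP => -[/eqP -> /eqP].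
  rewrite (big_pred1 [ffun => i]) /= ?/path_blocks ?enum_ord0 // => p /=.
  rewrite andbb; apply/eqP/eqP => [<-|->]; last by rewrite ffunE.
  by apply/ffunP => t; rewrite ffunE (ord1 t).
rewrite (reindex (fun xq : 'I_m * {ffun 'I_l.+1 -> 'I_m} => ffun_cons xq.1 xq.2)) /=; last first.
  apply: onW_bij.
  exists (fun p : {ffun 'I_l.+2 -> 'I_m} => (p ord0, [ffun t => p (lift ord0 t)])) => [[x q]|p] /=.
    by rewrite ffun_cons0; congr (_, _); apply/ffunP => t; rewrite ffunE ffun_consS.
  by apply/ffunP => t; rewrite ffunE; case: unliftP => [t'|] ->; rewrite ?ffunE.
have max_lift : (ord_max : 'I_l.+2) = lift ord0 (ord_max : 'I_l.+1) by apply: val_inj.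
rewrite (eq_bigl (fun xq : _ * {ffun _ -> _} => (xq.1 == i) && (xq.2 ord_max == k))); last first.
  by move=> [x q] /=; rewrite ffun_cons0 max_lift ffun_consS.
rewrite -(pair_big_dep (fun x : 'I_m => x == i)
  (fun _ (q : {ffun 'I_l.+1 -> 'I_m}) => q ord_max == k)
  (fun x q => g (path_blocks (ffun_cons x q)))) /= big_pred1_eq.
rewrite (partition_big (fun q : {ffun 'I_l.+1 -> 'I_m} => q ord0) predT) //=.
apply: eq_bigr => j _; rewrite -IH.
apply: eq_big => [q|q /andP [_ /eqP <-]]; first by rewrite andbC.
by rewrite path_blocks_cons.
Qed.

End Paths.

Lemma odot_entryE (R : comNzRingType) (M : lmodType R) (P : zmodType) (s m n : nat)
    (h : (s * m)%N = n) (W : 'M[M]_n) l (g : seq 'M[M]_s -> P) i k :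
  odot_entry h W l g i k = odot_seq (nseq l (mxblk h W)) g i k.
Proof. exact: sum_paths. Qed.

Section OdotNilpotent.
Variables (R : comNzRingType) (M : lmodType R) (s m : nat).
Local Notation blocks := ('I_m -> 'I_m -> 'M[M]_s).

Lemma multilinear_on_slot0 (P : lmodType R) l (g : seq 'M[M]_s -> P) :
  multilinear_on l g ->
  forall w1 w2, (size w1 + size w2).+1 = l -> g (w1 ++ 0 :: w2) = 0.
Proof.
move=> g_lin w1 w2 sw; have := g_lin w1 w2 1 0 0 sw.
rewrite addr0 scale1r scm1 => E.
by apply: (addrI (g (w1 ++ 0 :: w2))); rewrite addr0 -E.
Qed.

Definition odot_nilp (B : blocks) K := forall (P : lmodType R) (g : seq 'M[M]_s -> P),
  multilinear_on K g -> forall i k, odot_seq (nseq K B) g i k = 0.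

Lemma odot_zeroP n (h : (s * m)%N = n) (W : 'M[M]_n) K :
  odot_zero h W K <-> odot_nilp (mxblk h W) K.
Proof. by split=> W0 P g g_lin i k; [rewrite -odot_entryE | rewrite odot_entryE]; apply: W0. Qed.

Lemma odot_nilp_prefix (B : blocks) K a rest (P : lmodType R) (g : seq 'M[M]_s -> P) i k :
  odot_nilp B K -> (K <= a)%N -> multilinear_on (a + size rest) g ->
  odot_seq (nseq a B ++ rest) g i k = 0.
Proof.
move=> B0 Ka g_lin; rewrite -(subnKC Ka) nseqD -catA odot_seq_cat big1 // => j _.
apply: B0 => a0 b0 c x y sab.
rewrite -odot_seqZ -odot_seqD; apply: eq_odot_seq_size => w sw.
rewrite -!catA !cat_cons; apply: g_lin.
by move: sw; rewrite !size_cat size_nseq => ->; lia.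
Qed.

Lemma odot_nilp_suffix (B : blocks) K b pre (P : lmodType R) (g : seq 'M[M]_s -> P) i k :
  odot_nilp B K -> (K <= b)%N -> multilinear_on (size pre + b) g ->
  odot_seq (pre ++ nseq b B) g i k = 0.
Proof.
move=> B0 Kb g_lin; rewrite -(subnK Kb) nseqD catA odot_seq_cat big1 // => j _.
apply: odot_seq0 => w sw; apply: B0 => a0 b0 c x y sab.
rewrite !catA; apply: g_lin.
by move: sw; rewrite !size_cat size_nseq => ->; lia.
Qed.

Lemma odot_nilp_le (B : blocks) K K' : odot_nilp B K -> (K <= K')%N -> odot_nilp B K'.
Proof.
move=> B0 KK' P g g_lin i k; rewrite -(cats0 (nseq K' B)).
by apply: (odot_nilp_prefix _ _ B0 KK'); rewrite addn0.
Qed.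

End OdotNilpotent.

Section BlockDiagonal.
Variables (A : Type) (P : zmodType) (m m' : nat) (z : A).
Variables (B : 'I_(m + m') -> 'I_(m + m') -> A) (B1 : 'I_m -> 'I_m -> A) (B2 : 'I_m' -> 'I_m' -> A).
Hypotheses (B_ll : forall i j, B (lshift m' i) (lshift m' j) = B1 i j)
  (B_lr : forall i j, B (lshift m' i) (rshift m j) = z)
  (B_rl : forall i j, B (rshift m i) (lshift m' j) = z)
  (B_rr : forall i j, B (rshift m i) (rshift m j) = B2 i j).

Lemma odot_seq_block_diag l (g : seq A -> P) :
  (forall w1 w2, (size w1 + size w2).+1 = l -> g (w1 ++ z :: w2) = 0) ->
  [/\ forall i k, odot_seq (nseq l B) g (lshift m' i) (lshift m' k) = odot_seq (nseq l B1) g i k,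
      forall i k, odot_seq (nseq l B) g (lshift m' i) (rshift m k) = 0,
      forall i k, odot_seq (nseq l B) g (rshift m i) (lshift m' k) = 0 &
      forall i k, odot_seq (nseq l B) g (rshift m i) (rshift m k) = odot_seq (nseq l B2) g i k].
Proof.
elim: l g => [|l IH] g g_z.
  split=> i k /=.
  - by rewrite (inj_eq (@lshift_inj _ _)).
  - by rewrite eq_lrshift.
  - by rewrite eq_rlshift.
  - by rewrite (inj_eq (@rshift_inj _ _)).
have g_z_tail x w1 w2 : (size w1 + size w2).+1 = l -> g (x :: w1 ++ z :: w2) = 0.
  by move=> sw; apply: (g_z (x :: w1)); rewrite /= addSn sw.
have z_head j k : odot_seq (nseq l B) (fun w => g (z :: w)) j k = 0.
  by apply: odot_seq0 => w; rewrite size_nseq => sw; apply: (g_z [::]); rewrite sw.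
have IHx x := IH (fun w => g (x :: w)) (g_z_tail x).
split=> i k /=; rewrite big_split_ord /=.
- rewrite [X in _ + X]big1 ?addr0 => [|j _]; last by rewrite B_lr z_head.
  apply: eq_bigr => j _; rewrite B_ll.
  by case: (IHx (B1 i j)).
- rewrite [X in _ + X]big1 ?addr0 => [|j _]; last by rewrite B_lr z_head.
  apply: big1 => j _; rewrite B_ll.
  by case: (IHx (B1 i j)).
- rewrite big1 ?add0r => [|j _]; last by rewrite B_rl z_head.
  apply: big1 => j _; rewrite B_rr.
  by case: (IHx (B2 i j)).
- rewrite big1 ?add0r => [|j _]; last by rewrite B_rl z_head.
  apply: eq_bigr => j _; rewrite B_rr.
  by case: (IHx (B2 i j)).
Qed.

End BlockDiagonal.

Lemma psum_indep (R : comNzRingType) (M N : lmodType R) (s : nat)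
    (Y : 'M[M]_s) (F : seq 'M[M]_s -> 'M[N]_s) n m1 m2
    (h1 : (s * m1)%N = n) (h2 : (s * m2)%N = n) L (X : 'M[M]_n) :
  psum h1 Y F L X = psum h2 Y F L X.
Proof.
have [s0|s_gt0] := posnP s; first exact: (mx_dim0_eq h1).
have m21 := blocks_dim_eq s_gt0 h2 h1; subst m2.
by rewrite (eq_irrelevance h1 h2).
Qed.

Section NcFunction.
Variables (R : comNzRingType) (M N : lmodType R) (s : nat).
Variables (Y : 'M[M]_s) (F : seq 'M[M]_s -> 'M[N]_s).
Hypothesis F_lin : multilinear F.
Hypothesis F_lmul_nil : forall S : 'M[R]_s,
  lmul S (F [::]) - rmul (F [::]) S = F [:: commS S Y].
Hypothesis F_lmul_head : forall (S : 'M[R]_s) (Z : 'M[M]_s) (Zs : seq 'M[M]_s),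
  lmul S (F (Z :: Zs)) - F (lmul S Z :: Zs) = F (commS S Y :: Z :: Zs).
Hypothesis F_rmul_lmul : forall (S : 'M[R]_s) (a b : seq 'M[M]_s) (Z Z' : 'M[M]_s),
  F (a ++ rmul Z S :: Z' :: b) - F (a ++ Z :: lmul S Z' :: b)
  = F (a ++ Z :: commS S Y :: Z' :: b).
Hypothesis F_rmul_last : forall (S : 'M[R]_s) (a : seq 'M[M]_s) (Z : 'M[M]_s),
  F (rcons a (rmul Z S)) - rmul (F (rcons a Z)) S = F (a ++ [:: Z; commS S Y]).

Lemma F_slotD a b (x y : 'M[M]_s) : F (a ++ (x + y) :: b) = F (a ++ x :: b) + F (a ++ y :: b).
Proof. by have := F_lin a b 1 x y; rewrite !scm1. Qed.

Lemma F_slot0 a b : F (a ++ 0 :: b) = 0.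
Proof. by apply: (addrI (F (a ++ 0 :: b))); rewrite -F_slotD !addr0. Qed.

Lemma F_slotB a b (x y : 'M[M]_s) : F (a ++ (x - y) :: b) = F (a ++ x :: b) - F (a ++ y :: b).
Proof. by apply: (addIr (F (a ++ y :: b))); rewrite -F_slotD !subrK. Qed.

Lemma F_slot_sum a b (I : Type) (xs : seq I) (G : I -> 'M[M]_s) :
  F (a ++ (\sum_(x <- xs) G x) :: b) = \sum_(x <- xs) F (a ++ G x :: b).
Proof.
by apply: (big_morph (fun x => F (a ++ x :: b))); [exact: F_slotD | exact: F_slot0].
Qed.

Lemma F_entry_multilinear l (a b : 'I_s) : multilinear_on l (fun w => F w a b).
Proof. by move=> a0 b0 c x y _ /=; rewrite F_lin !mxE. Qed.

Section Lifting.
Variable m : nat.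
Local Notation blocks := ('I_m -> 'I_m -> 'M[M]_s).
Local Notation odotF Bs := (@odot_seq _ _ m Bs F).

Lemma odotF_entry Bs i k (a b : 'I_s) : odotF Bs i k a b = odot_seq Bs (fun w => F w a b) i k.
Proof.
by rewrite (odot_seq_morph (phi := fun x : 'M[N]_s => x a b)) ?mxE // => x y; rewrite mxE.
Qed.

Lemma odotF_slotB As (B1 B2 : blocks) Bs i k :
  odotF (As ++ (fun i j => B1 i j - B2 i j) :: Bs) i k
  = odotF (As ++ B1 :: Bs) i k - odotF (As ++ B2 :: Bs) i k.
Proof.
rewrite !odot_seq_cat -sumrB; apply: eq_bigr => j _; rewrite -odot_seqB.
apply: eq_odot_seq => w /=; rewrite -sumrB; apply: eq_bigr => t _.
by rewrite -odot_seqB; apply: eq_odot_seq => w'; exact: F_slotB.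
Qed.

Variable Sb : 'I_m -> 'I_m -> 'M[R]_s.

Definition comm_blk (i j : 'I_m) : 'M[M]_s := commS (Sb i j) Y.

Lemma odotF_lmul_nil i k :
  blmul Sb (odotF [::]) i k - brmul (odotF [::]) Sb i k = odotF [:: comm_blk] i k.
Proof.
rewrite /blmul /brmul odot_seq1 /=.
rewrite (@sumr_only _ _ k) => [|j ne]; last by rewrite (negbTE ne) lmul0.
rewrite (@sumr_only _ _ i) => [|j ne]; last by rewrite eq_sym (negbTE ne) rmul0.
by rewrite !eqxx F_lmul_nil.
Qed.

Lemma odotF_lmul_head (B : blocks) Bs i k :
  blmul Sb (odotF (B :: Bs)) i k - odotF (blmul Sb B :: Bs) i k
  = odotF (comm_blk :: B :: Bs) i k.
Proof.
have slot_sum t : odot_seq Bs (fun w => F (blmul Sb B i t :: w)) t k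
    = \sum_(j < m) odot_seq Bs (fun w => F (lmul (Sb i j) (B j t) :: w)) t k.
  by rewrite -odot_seq_sum; apply: eq_odot_seq => w; exact: (F_slot_sum [::]).
rewrite /= [X in _ - X](eq_bigr _ (fun t _ => slot_sum t)) exchange_big -sumrB.
apply: eq_bigr => j _; rewrite lmul_sum -sumrB; apply: eq_bigr => t _.
rewrite -(odot_seq_morph (phi := lmul (Sb i j))) ?lmul0 //; last exact: lmulD.
by rewrite -odot_seqB; apply: eq_odot_seq => w; rewrite -F_lmul_head.
Qed.

Lemma odotF_rmul_lmul As (Z Z' : blocks) Bs i k :
  odotF (As ++ brmul Z Sb :: Z' :: Bs) i k - odotF (As ++ Z :: blmul Sb Z' :: Bs) i k
  = odotF (As ++ Z :: comm_blk :: Z' :: Bs) i k.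
Proof.
rewrite !odot_seq_cat -sumrB; apply: eq_bigr => j _; rewrite -odot_seqB.
apply: eq_odot_seq => w /=.
have expand_rmul t u : odot_seq Bs (fun w' => F (w ++ brmul Z Sb j t :: Z' t u :: w')) u k
    = \sum_(v < m) odot_seq Bs (fun w' => F (w ++ rmul (Z j v) (Sb v t) :: Z' t u :: w')) u k.
  by rewrite -odot_seq_sum; apply: eq_odot_seq => w'; exact: F_slot_sum.
have expand_lmul v u : odot_seq Bs (fun w' => F (w ++ Z j v :: blmul Sb Z' v u :: w')) u k
    = \sum_(t < m) odot_seq Bs (fun w' => F (w ++ Z j v :: lmul (Sb v t) (Z' t u) :: w')) u k.
  rewrite -odot_seq_sum; apply: eq_odot_seq => w'.
  by rewrite -cat_rcons F_slot_sum; apply: eq_bigr => t _; rewrite cat_rcons.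
under eq_bigr => t _ do rewrite (eq_bigr _ (fun u _ => expand_rmul t u)) exchange_big.
under [X in _ - X]eq_bigr => v _ do rewrite (eq_bigr _ (fun u _ => expand_lmul v u)) exchange_big.
rewrite exchange_big -sumrB; apply: eq_bigr => v _; rewrite -sumrB; apply: eq_bigr => t _.
rewrite -sumrB; apply: eq_bigr => u _; rewrite -odot_seqB; apply: eq_odot_seq => w'.
exact: F_rmul_lmul.
Qed.

Lemma odotF_rmul_last As (Z : blocks) i k :
  odotF (rcons As (brmul Z Sb)) i k - brmul (odotF (rcons As Z)) Sb i k
  = odotF (As ++ [:: Z; comm_blk]) i k.
Proof.
rewrite /brmul -!cats1.
have rmul_odot : \sum_(v < m) rmul (odotF (As ++ [:: Z]) i v) (Sb v k) =
    \sum_(j < m) \sum_(v < m) odot_seq As (fun w => rmul (F (w ++ [:: Z j v])) (Sb v k)) i j.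
  rewrite exchange_big; apply: eq_bigr => v _; rewrite odot_seq_cat rmul_sum.
  apply: eq_bigr => j _.
  rewrite (odot_seq_morph (phi := fun x : 'M[N]_s => rmul x (Sb v k))) ?rmul0 //.
    by congr rmul; apply: eq_odot_seq => w; rewrite odot_seq1.
  by move=> x y; exact: rmulD.
rewrite rmul_odot !odot_seq_cat -sumrB; apply: eq_bigr => j _.
rewrite -odot_seq_sum -odot_seqB; apply: eq_odot_seq => w.
rewrite odot_seq1 odot_seq2 (F_slot_sum w [::]) -sumrB; apply: eq_bigr => v _.
by rewrite !cats1 F_rmul_last.
Qed.

Variables (W W' : blocks).
Hypothesis SW : blmul Sb W = (fun i k => brmul W' Sb i k - comm_blk i k).

Definition odot_comm a b := odotF (nseq a W' ++ comm_blk :: nseq b W).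

(* the sum of the words W'^a D W^b with a + b = L - 1 and a >= a0 *)
Definition defect a0 L i k := \sum_(t < L) odot_comm (a0 + t) (L.-1 - t) i k.

Lemma defect0 a i k : defect a 0 i k = 0.
Proof. exact: big_ord0. Qed.

Lemma defectS a L i k : defect a L.+1 i k = odot_comm a L i k + defect a.+1 L i k.
Proof.
rewrite /defect big_ord_recl addn0 subn0; congr (_ + _).
by apply: eq_bigr => t _; congr odot_comm; rewrite /= /bump /=; lia.
Qed.

(* S sits after the a-th factor; moving it past a factor W turns that factor into W'. *)
Lemma odotF_push a b i k :
  odotF (nseq a W' ++ brmul W' Sb :: nseq b W) i k + defect a.+1 b i k
  = brmul (odotF (nseq (a.+1 + b) W')) Sb i k + defect a.+1 b.+1 i k.
Proof.
elim: b a => [|b IH] a.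
  move/eqP: (odotF_rmul_last (nseq a W') W' i k); rewrite subr_eq => /eqP.
  rewrite cats1 => ->; rewrite defectS !defect0 !addr0 addn0 addrC.
  by rewrite /odot_comm -cats1 !cat_nseq_cons cats0.
move/eqP: (odotF_rmul_lmul (nseq a W') W' W (nseq b W) i k); rewrite subr_eq => /eqP E.
rewrite [nseq b.+1 W]/= E SW !cat_nseq_cons (odotF_slotB _ (brmul W' Sb)).
rewrite -/(odot_comm a.+1 b) -/(odot_comm a.+1 b.+1) (defectS a.+1 b).
by rewrite -addrA subrKA IH (defectS a.+1 b.+1) addSnnS addrCA.
Qed.

Lemma odotF_commute l i k :
  blmul Sb (odotF (nseq l W)) i k + defect 0 l i k
  = brmul (odotF (nseq l W')) Sb i k + defect 0 l.+1 i k.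
Proof.
case: l => [|b].
  move/eqP: (odotF_lmul_nil i k); rewrite subr_eq => /eqP ->.
  by rewrite defectS !defect0 !addr0 addrC.
move/eqP: (odotF_lmul_head W (nseq b W) i k); rewrite subr_eq => /eqP E.
rewrite [nseq b.+1 W]/= E SW (odotF_slotB [::] (brmul W' Sb)) /=.
rewrite -/(odot_comm 0 b) -/(odot_comm 0 b.+1) (defectS 0 b) -addrA subrKA.
by have := odotF_push 0 b i k; rewrite cat0s add1n => ->; rewrite (defectS 0 b.+1) addrCA.
Qed.

Definition odotF_series (B : blocks) L i k := \sum_(l < L) odotF (nseq l B) i k.

Lemma odotF_series_commute L i k :
  blmul Sb (odotF_series W L) i k = brmul (odotF_series W' L) Sb i k + defect 0 L i k.
Proof.
elim: L i k => [|L IH] i k.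
  rewrite defect0 addr0 /blmul /brmul !big1 // => j _; rewrite /odotF_series big_ord0.
    exact: rmul0.
  exact: lmul0.
have -> : blmul Sb (odotF_series W L.+1) i k
    = blmul Sb (odotF_series W L) i k + blmul Sb (odotF (nseq L W)) i k.
  by rewrite /blmul -big_split; apply: eq_bigr => j _; rewrite /odotF_series big_ord_recr lmulD.
have -> : brmul (odotF_series W' L.+1) Sb i k
    = brmul (odotF_series W' L) Sb i k + brmul (odotF (nseq L W')) Sb i k.
  by rewrite /brmul -big_split; apply: eq_bigr => j _; rewrite /odotF_series big_ord_recr rmulD.
by rewrite IH -addrA (addrC (defect 0 L i k)) odotF_commute !addrA.
Qed.

Lemma defect_eq0 K1 K2 L i k : odot_nilp W K1 -> odot_nilp W' K2 ->
  (K1 + K2 < L)%N -> defect 0 L i k = 0.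
Proof.
move=> W0 W'0 KL; rewrite /defect big1 // => t _; apply/matrixP => a b.
rewrite mxE /odot_comm odotF_entry add0n.
have [K2t|tK2] := leqP K2 t.
  by apply: (odot_nilp_prefix _ _ W'0 K2t); apply: F_entry_multilinear.
rewrite -cat_rcons; apply: (odot_nilp_suffix _ _ W0); last exact: F_entry_multilinear.
by have := ltn_ord t; lia.
Qed.

End Lifting.

Section SeriesBlocks.
Variables (m n : nat) (h : (s * m)%N = n).

Lemma mxblk_psum L (X : 'M[M]_n) :
  mxblk h (psum h Y F L X) = odotF_series (mxblk h (X - bdiag h Y)) L.
Proof.
apply: functional_extensionality => i; apply: functional_extensionality => k.
by rewrite /psum mxblk_unblk; apply: eq_bigr => l _; rewrite odot_entryE.
Qed.

Lemma psum_stable (X : 'M[M]_n) K L : odot_zero h (X - bdiag h Y) K -> (K <= L)%N ->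
  psum h Y F L X = psum h Y F K X.
Proof.
move=> /odot_zeroP W0 KL; apply: (@mxblkP _ _ _ h) => i k; rewrite !mxblk_psum.
rewrite /odotF_series -(subnKC KL) big_split_ord /= [X in _ + X]big1 ?addr0 // => l _.
apply/matrixP => a b; rewrite mxE odotF_entry -(cats0 (nseq _ _)).
by apply: (odot_nilp_prefix _ _ W0 (leq_addr _ _)); apply: F_entry_multilinear.
Qed.

Lemma blmul_similar (S : 'M[R]_n) (X X' : 'M[M]_n) : lmul S X = rmul X' S ->
  blmul (mxblk h S) (mxblk h (X - bdiag h Y)) =
  (fun i k => brmul (mxblk h (X' - bdiag h Y)) (mxblk h S) i k - comm_blk (mxblk h S) i k).
Proof.
move=> SX; apply: functional_extensionality => i; apply: functional_extensionality => k.
have lmul_diag : \sum_(j < m) lmul (mxblk h S i j) (mxblk h (bdiag h Y) j k)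
    = lmul (mxblk h S i k) Y.
  rewrite (@sumr_only _ _ k) ?mxblk_bdiag ?eqxx // => j ne.
  by rewrite mxblk_bdiag (negbTE ne) lmul0.
have rmul_diag : \sum_(j < m) rmul (mxblk h (bdiag h Y) i j) (mxblk h S j k)
    = rmul Y (mxblk h S i k).
  rewrite (@sumr_only _ _ i) ?mxblk_bdiag ?eqxx // => j ne.
  by rewrite mxblk_bdiag eq_sym (negbTE ne) rmul0.
rewrite /blmul /brmul; under eq_bigr => j _ do rewrite mxblkB lmulB.
under [X in X - _]eq_bigr => j _ do rewrite mxblkB rmulB.
rewrite !sumrB lmul_diag rmul_diag -/(blmul _ _ i k) -/(brmul _ _ i k).
by rewrite -mxblk_lmul -mxblk_rmul SX /comm_blk /commS opprB subrKA.
Qed.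

Lemma psum_similar (S : 'M[R]_n) (X X' : 'M[M]_n) K1 K2 L :
  lmul S X = rmul X' S ->
  odot_zero h (X - bdiag h Y) K1 -> odot_zero h (X' - bdiag h Y) K2 -> (K1 + K2 < L)%N ->
  lmul S (psum h Y F L X) = rmul (psum h Y F L X') S.
Proof.
move=> SX /odot_zeroP W0 /odot_zeroP W'0 KL; apply: (@mxblkP _ _ _ h) => i k.
rewrite mxblk_lmul mxblk_rmul !mxblk_psum.
by rewrite (odotF_series_commute (blmul_similar SX)) (defect_eq0 _ _ _ W0 W'0 KL) addr0.
Qed.

End SeriesBlocks.

Section DirectSum.
Variables (m m' n n' : nat) (h : (s * m)%N = n) (h' : (s * m')%N = n').
Variable hD : (s * (m + m'))%N = (n + n')%N.

Lemma bidx_lshift i a : bidx hD (lshift m' i) a = lshift n' (bidx h i a).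
Proof. exact: val_inj. Qed.

Lemma bidx_rshift i a : bidx hD (rshift m i) a = rshift n (bidx h' i a).
Proof. by apply: val_inj => /=; rewrite -h; lia. Qed.

Lemma mxblk_dsum (V : lmodType R) (X : 'M[V]_n) (X' : 'M[V]_n') :
  [/\ forall i j, mxblk hD (dsum X X') (lshift m' i) (lshift m' j) = mxblk h X i j,
      forall i j, mxblk hD (dsum X X') (lshift m' i) (rshift m j) = 0,
      forall i j, mxblk hD (dsum X X') (rshift m i) (lshift m' j) = 0 &
      forall i j, mxblk hD (dsum X X') (rshift m i) (rshift m j) = mxblk h' X' i j].
Proof.
split=> i j; apply/matrixP => a b; rewrite [LHS]mxE ?bidx_lshift ?bidx_rshift /dsum.
- by rewrite [RHS]mxE block_mxEul.
- by rewrite block_mxEur !mxE.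
- by rewrite block_mxEdl !mxE.
- by rewrite [RHS]mxE block_mxEdr.
Qed.

Lemma mxblk_dsum_bdiag (X : 'M[M]_n) (X' : 'M[M]_n') :
  let W := mxblk hD (dsum X X' - bdiag hD Y) in
  [/\ forall i j, W (lshift m' i) (lshift m' j) = mxblk h (X - bdiag h Y) i j,
      forall i j, W (lshift m' i) (rshift m j) = 0,
      forall i j, W (rshift m i) (lshift m' j) = 0 &
      forall i j, W (rshift m i) (rshift m j) = mxblk h' (X' - bdiag h' Y) i j].
Proof.
have [D_ll D_lr D_rl D_rr] := mxblk_dsum X X'.
split=> i j; rewrite !mxblkB !mxblk_bdiag.
- by rewrite D_ll (inj_eq (@lshift_inj _ _)).
- by rewrite D_lr eq_lrshift subr0.
- by rewrite D_rl eq_rlshift subr0.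
- by rewrite D_rr (inj_eq (@rshift_inj _ _)).
Qed.

Lemma odot_zero_dsum (X : 'M[M]_n) (X' : 'M[M]_n') K1 K2 :
  odot_zero h (X - bdiag h Y) K1 -> odot_zero h' (X' - bdiag h' Y) K2 ->
  odot_zero hD (dsum X X' - bdiag hD Y) (K1 + K2).
Proof.
move=> /odot_zeroP W0 /odot_zeroP W'0; apply/odot_zeroP => P g g_lin i k.
have [W_ll W_lr W_rl W_rr] := mxblk_dsum_bdiag X X'.
have [O_ll O_lr O_rl O_rr] :=
  odot_seq_block_diag W_ll W_lr W_rl W_rr (multilinear_on_slot0 g_lin).
rewrite -(splitK i) -(splitK k); case: (split i) => i0; case: (split k) => k0 /=.
- by rewrite O_ll; apply: (odot_nilp_le W0 (leq_addr _ _)).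
- exact: O_lr.
- exact: O_rl.
- by rewrite O_rr; apply: (odot_nilp_le W'0 (leq_addl _ _)).
Qed.

Lemma psum_dsum L (X : 'M[M]_n) (X' : 'M[M]_n') :
  psum hD Y F L (dsum X X') = dsum (psum h Y F L X) (psum h' Y F L X').
Proof.
apply: (@mxblkP _ _ _ hD) => i k.
have [W_ll W_lr W_rl W_rr] := mxblk_dsum_bdiag X X'.
have [D_ll D_lr D_rl D_rr] := mxblk_dsum (psum h Y F L X) (psum h' Y F L X').
have O l := odot_seq_block_diag W_ll W_lr W_rl W_rr (l := l) (fun w1 w2 _ => F_slot0 w1 w2).
rewrite -(splitK i) -(splitK k); case: (split i) => i0; case: (split k) => k0 /=;
  rewrite ?D_ll ?D_lr ?D_rl ?D_rr !mxblk_psum /odotF_series.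
- by apply: eq_bigr => l _; case: (O l).
- by apply: big1 => l _; case: (O l).
- by apply: big1 => l _; case: (O l).
- by apply: eq_bigr => l _; case: (O l).
Qed.

End DirectSum.

Definition psum_limit n (X : 'M[M]_n) (v : 'M[N]_n) : Prop :=
  exists m (h : (s * m)%N = n) L, forall L', (L <= L')%N -> v = psum h Y F L' X.

(* the value is irrelevant off Nilp(M, Y) *)
Definition nc_sum n (X : 'M[M]_n) : 'M[N]_n := epsilon (inhabits 0) (psum_limit X).

Lemma nc_sumE m n (h : (s * m)%N = n) (X : 'M[M]_n) : nilpot h Y X ->
  exists L, forall L', (L <= L')%N -> nc_sum X = psum h Y F L' X.
Proof.
move=> [K W0].
have lim : exists v, psum_limit X v.
  by exists (psum h Y F K X), m, h, K => L' KL'; rewrite (psum_stable W0 KL').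
have [m2 [h2 [L2 E2]]] := epsilon_spec (inhabits 0) (psum_limit X) lim.
by exists L2 => L' LL'; rewrite /nc_sum (E2 L' LL'); exact: psum_indep.
Qed.

Lemma NilpD_dsum n n' (X : 'M[M]_n) (X' : 'M[M]_n') :
  NilpD Y X -> NilpD Y X' -> NilpD Y (dsum X X').
Proof.
move=> [m [h [m_gt0 [K1 W0]]]] [m' [h' [_ [K2 W'0]]]].
have hD : (s * (m + m'))%N = (n + n')%N by rewrite mulnDr h h'.
exists (m + m')%N, hD; split; first by rewrite addn_gt0 m_gt0.
by exists (K1 + K2)%N; apply: odot_zero_dsum.
Qed.

Lemma nc_sum_dsum n n' (X : 'M[M]_n) (X' : 'M[M]_n') :
  NilpD Y X -> NilpD Y X' -> nc_sum (dsum X X') = dsum (nc_sum X) (nc_sum X').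
Proof.
move=> [m [h [_ [K1 W0]]]] [m' [h' [_ [K2 W'0]]]].
have hD : (s * (m + m'))%N = (n + n')%N by rewrite mulnDr h h'.
have [L1 E1] := nc_sumE (ex_intro _ K1 W0).
have [L2 E2] := nc_sumE (ex_intro _ K2 W'0).
have [L3 E3] := nc_sumE (ex_intro _ _ (odot_zero_dsum hD W0 W'0)).
pose L := (L1 + L2 + L3)%N.
rewrite (E1 L) ?(E2 L) ?(E3 L) /L; try lia.
exact: psum_dsum.
Qed.

Lemma nc_sum_similar n (X : 'M[M]_n) (S T : 'M[R]_n) :
  S *m T = 1%:M -> T *m S = 1%:M -> NilpD Y X -> NilpD Y (rmul (lmul S X) T) ->
  nc_sum (rmul (lmul S X) T) = rmul (lmul S (nc_sum X)) T.
Proof.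
move=> ST TS [m [h [_ [K1 W0]]]] [m2 [h2 [_ [K2 W'0]]]].
have [s0|s_gt0] := posnP s; first exact: (mx_dim0_eq h).
have m2m := blocks_dim_eq s_gt0 h2 h; subst m2; rewrite (eq_irrelevance h2 h) in W'0.
set X' := rmul (lmul S X) T in W'0 *.
have SX : lmul S X = rmul X' S by rewrite /X' rmulA TS rmul1.
have [L1 E1] := nc_sumE (ex_intro _ K1 W0).
have [L2 E2] := nc_sumE (ex_intro _ K2 W'0).
pose L := (L1 + L2 + K1 + K2).+1.
rewrite (E1 L) ?(E2 L) /L; try lia.
by rewrite (psum_similar SX W0 W'0) ?rmulA ?ST ?rmul1 //; lia.
Qed.

End NcFunction.

Unset Implicit Arguments.

Theorem theorem5p13 (R : comNzRingType) (M N : lmodType R) (s : nat)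
  (Y : 'M[M]_s) (F : seq 'M[M]_s -> 'M[N]_s)
  (Flin : multilinear F)
  (H0 : forall S : 'M[R]_s,
      lmul S (F [::]) - rmul (F [::]) S = F [:: commS S Y])
  (H1 : forall (S : 'M[R]_s) (Z : 'M[M]_s) (Zs : seq 'M[M]_s),
      lmul S (F (Z :: Zs)) - F (lmul S Z :: Zs) = F (commS S Y :: Z :: Zs))
  (H2 : forall (S : 'M[R]_s) (a b : seq 'M[M]_s) (Z Z' : 'M[M]_s),
      F (a ++ rmul Z S :: Z' :: b) - F (a ++ Z :: lmul S Z' :: b)
      = F (a ++ Z :: commS S Y :: Z' :: b))
  (H3 : forall (S : 'M[R]_s) (a : seq 'M[M]_s) (Z : 'M[M]_s),
      F (rcons a (rmul Z S)) - rmul (F (rcons a Z)) S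
      = F (a ++ [:: Z; commS S Y])) :
  exists f : forall n, 'M[M]_n -> 'M[N]_n,
    (forall m n (h : (s * m)%N = n) (X : 'M[M]_n), (0 < m)%N -> nilpot h Y X ->
       exists L, forall L', (L <= L')%N -> f n X = psum h Y F L' X)
    /\ nc_fun (NilpD Y) f.
Proof.
exists (nc_sum Y F); split=> [m n h X _|]; first exact: nc_sumE.
split.
- exact: NilpD_dsum.
- exact: nc_sum_dsum.
- exact: nc_sum_similar Flin H0 H1 H2 H3.
Qed.
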